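(* Under the standing assumptions below, fix $k\ge1$ and define recursively, for $h\ge1$, $$\widetilde{X'_k}(h)=-\sum_{j=1}^{h-1}a_j\,\widetilde{X'_k}(h-j)-\sum_{j=1}^{k}a_{h-1+j}X_{k+1-j}$$ (the $h$-step truncated Wiener–Kolmogorov predictor of order $k$; the first sum is empty for $h=1$). Then for every $h\ge1$, $$X_{k+h}-\widetilde{X'_k}(h)=\sum_{l=0}^{h-1}b_l\,\varepsilon_{k+h-l}-\sum_{j=k+1}^{\infty}\Big(\sum_{m=0}^{h-1}a_{j+h-1-m}\,b_m\Big)X_{k+1-j},$$ and consequently $$\mathbb E\big[(\widetilde{X'_k}(h)-X_{k+h})^2\big]=\sigma_\varepsilon^2\sum_{l=0}^{h-1}b_l^2+\mathbb E\Big[\Big(\sum_{j=k+1}^{\infty}\Big(\sum_{m=0}^{h-1}a_{j+h-1-m}b_m\Big)X_{k+1-j}\Big)^2\Big].$$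
   Context: Standing assumptions. Let $(X_n)_{n\in\mathbb Z}$ be a real, zero-mean, weakly stationary process in $L^2$ with autocovariance function $\sigma(j)=\mathbb E[X_nX_{n+j}]$, satisfying $\sum_{j\in\mathbb Z}|\sigma(j)|=\infty$. Assume $X_n=\sum_{j\ge0}b_j\varepsilon_{n-j}$ (convergence in $L^2$). Here $(\varepsilon_n)_{n\in\mathbb Z}$ is a sequence of uncorrelated random variables with mean $0$ and variance $\sigma_\varepsilon^2>0$, and $b_0=1$, $\sum_j b_j^2<\infty$. Assume also $\varepsilon_n=\sum_{j\ge0}a_jX_{n-j}$ with $a_0=1$ and $\sum_j|a_j|<\infty$. The power series $A(z)=\sum_{j\ge0}a_jz^j$ and $B(z)=\sum_{j\ge0}b_jz^j$ satisfy $A(z)B(z)=1$ for $|z|\le1$. Fix $d\in(0,1/2)$. Assume that for every $\delta>0$ there exist constants $C_1,C_2$ (depending on $\delta$) such that $|a_j|\le C_1j^{-d-1+\delta}$ and $|b_j|\le C_2j^{d-1+\delta}$ for all $j\ge1$. *)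

From HB Require Import structures.
From mathcomp Require Import all_boot all_order all_algebra.
From mathcomp Require Import all_classical all_reals all_analysis.
Set Implicit Arguments. Unset Strict Implicit. Unset Printing Implicit Defensive.
Import Order.TTheory GRing.Theory Num.Theory.
Import numFieldNormedType.Exports.
Local Open Scope classical_set_scope.
Local Open Scope ring_scope.

Definition L2_cvg d (T : measurableType d) (R : realType) (P : probability T R)
  (u : nat -> T -> R) (Y : T -> R) : Prop :=
  ((fun N => 'E_P[(fun w => (u N w - Y w) ^+ 2)%R]%E) @ \oo --> 0%E).

From HB Require Import structures.
From mathcomp Require Import all_boot all_order all_algebra.
From mathcomp Require Import all_classical all_reals all_analysis.
From mathcomp Require Import zify ring lra.
Import Order.TTheory GRing.Theory Num.Theory.
Import numFieldNormedType.Exports.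
Local Open Scope classical_set_scope.
Local Open Scope ring_scope.

(* Write D_g = X_{k+g} - Xt_g.  The recursion says that the AR filter a applied to
   D_1, ..., D_h is the AR filter applied to X cut off after lag h + k - 1, and since
   a * b = delta this inverts, for every N > k, to the pathwise identity
     (tail sum up to N) - S = sum_{l<h} b_l (AR partial sum of eps_{k+h-l} - eps_{k+h-l})
   with S := sum_{l<h} b_l eps_{k+h-l} - D_h.  The right-hand side tends to 0 in L^2, so the
   tail sum converges to S.  The tail only involves X_n with n <= 0, which are orthogonal to
   the innovations eps_{k+h-l}, l < h; this gives the mean squared error.  The identity
   a * b = delta itself comes from pairing the AR expansion of eps_0 with eps_{-t}. *)

Section L2InnerProduct.
Context {d : measure_display} {T : measurableType d} {R : realType}.
Variable P : probability T R.
Local Notation L2 := (Lfun P 2%:E).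
Implicit Types f g h : T -> R.

Lemma Lfun2D f g : f \in L2 -> g \in L2 -> (fun w => f w + g w) \in L2.
Proof. by move=> hf hg; apply: rpredD hf hg; rewrite lee1n. Qed.

Lemma Lfun2B f g : f \in L2 -> g \in L2 -> (fun w => f w - g w) \in L2.
Proof. by move=> hf hg; apply: rpredB hf hg; rewrite lee1n. Qed.

Lemma Lfun2Z c f : f \in L2 -> (fun w => c * f w) \in L2.
Proof. by move=> hf; apply: (rpredZ c) hf; rewrite lee1n. Qed.

Lemma Lfun2_sum (I : eqType) (r : seq I) (c : I -> R) (F : I -> T -> R) :
  (forall i, i \in r -> F i \in L2) -> (fun w => \sum_(i <- r) c i * F i w) \in L2.
Proof.
elim: r => [|i r IH] hF.
  under eq_fun do rewrite big_nil; exact: Lfun_cst.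
under eq_fun do rewrite big_cons.
by apply: Lfun2D; [apply/Lfun2Z/hF/mem_head | apply/IH => j rj; apply/hF/mem_behead].
Qed.

Lemma Lfun2N f : f \in L2 -> (fun w => - f w) \in L2.
Proof. by move=> /(Lfun2Z (-1)); under eq_fun do rewrite mulN1r. Qed.

Definition dotL2 f g : R := fine ('E_P[f \* g])%E.

Lemma dotL2E f g : f \in L2 -> g \in L2 -> ('E_P[f \* g] = (dotL2 f g)%:E)%E.
Proof.
by move=> hf hg; rewrite fineK // expectation_fin_num // Lfun2_mul_Lfun1.
Qed.

Lemma dotL2C f g : dotL2 f g = dotL2 g f.
Proof.
by rewrite /dotL2; congr (fine ('E_P[_])%E); apply/funext => w /=; rewrite mulrC.
Qed.

Lemma dotL2_ge0 f : 0 <= dotL2 f f.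
Proof. by rewrite fine_ge0 // expectation_ge0 // => w /=; rewrite -expr2 sqr_ge0. Qed.

Lemma dotL2_0l g : dotL2 (fun=> 0) g = 0.
Proof.
rewrite /dotL2 (_ : _ \* g = cst 0) ?expectation_cst //.
by apply/funext => w /=; rewrite mul0r.
Qed.

Lemma dotL2Dl f g h : f \in L2 -> g \in L2 -> h \in L2 ->
  dotL2 (fun w => f w + g w) h = dotL2 f h + dotL2 g h.
Proof.
move=> hf hg hh; apply: EFin_inj; rewrite EFinD -!dotL2E ?Lfun2D //.
have -> : (fun w => f w + g w) \* h = (f \* h) \+ (g \* h).
  by apply/funext => w /=; rewrite mulrDl.
by rewrite expectationD // Lfun2_mul_Lfun1.
Qed.

Lemma dotL2Zl c f h : f \in L2 -> h \in L2 ->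
  dotL2 (fun w => c * f w) h = c * dotL2 f h.
Proof.
move=> hf hh; apply: EFin_inj; rewrite EFinM -!dotL2E ?Lfun2Z //.
have -> : (fun w => c * f w) \* h = c \o* (f \* h).
  by apply/funext => w /=; rewrite [RHS]mulrC mulrA.
by rewrite expectationZl // Lfun2_mul_Lfun1.
Qed.

Lemma dotL2Bl f g h : f \in L2 -> g \in L2 -> h \in L2 ->
  dotL2 (fun w => f w - g w) h = dotL2 f h - dotL2 g h.
Proof.
move=> hf hg hh; rewrite dotL2Dl ?Lfun2N //.
have -> : (fun w => - g w) = (fun w => -1 * g w).
  by apply/funext => w; rewrite mulN1r.
by rewrite dotL2Zl // mulN1r.
Qed.

Lemma dotL2_suml (I : eqType) (r : seq I) (c : I -> R) (F : I -> T -> R) g :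
  (forall i, i \in r -> F i \in L2) -> g \in L2 ->
  dotL2 (fun w => \sum_(i <- r) c i * F i w) g = \sum_(i <- r) c i * dotL2 (F i) g.
Proof.
elim: r => [|i r IH] hF hg.
  under eq_fun do rewrite big_nil.
  by rewrite big_nil dotL2_0l.
have hr j : j \in r -> F j \in L2 by move=> rj; apply/hF/mem_behead.
under eq_fun do rewrite big_cons.
by rewrite big_cons dotL2Dl ?dotL2Zl ?IH ?Lfun2Z ?Lfun2_sum ?hF ?mem_head.
Qed.

Lemma dotL2_sqrD f g s : f \in L2 -> g \in L2 ->
  dotL2 (fun w => f w + s * g w) (fun w => f w + s * g w)
  = dotL2 f f + 2 * s * dotL2 f g + s ^+ 2 * dotL2 g g.
Proof.
move=> hf hg; have hsg : (fun w => s * g w) \in L2 by exact: Lfun2Z.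
rewrite dotL2Dl ?Lfun2D // dotL2Zl ?Lfun2D // ![dotL2 _ (fun w => _ + _)]dotL2C.
rewrite !dotL2Dl // !dotL2Zl // [dotL2 g f]dotL2C; ring.
Qed.

Lemma dotL2_sqrD_le f g s : f \in L2 -> g \in L2 ->
  dotL2 (fun w => f w + s * g w) (fun w => f w + s * g w)
  <= 2 * dotL2 f f + 2 * (s ^+ 2 * dotL2 g g).
Proof.
move=> hf hg; have := dotL2_ge0 (fun w => f w + - s * g w).
rewrite !dotL2_sqrD //; lra.
Qed.

(* A weak Cauchy-Schwarz inequality; the [+ 1] spares a case split on [dotL2 g g = 0]. *)
Lemma dotL2_sqr_le f g : f \in L2 -> g \in L2 ->
  dotL2 f g ^+ 2 <= dotL2 f f * (dotL2 g g + 1).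
Proof.
move=> hf hg; set A := dotL2 f f; set B := dotL2 g g; set C := dotL2 f g.
have B0 : 0 <= B := dotL2_ge0 g; have A0 : 0 <= A := dotL2_ge0 f.
set t := C / (B + 1); have tB : C = t * (B + 1) by rewrite /t divfK // gt_eqF // ltr_wpDl.
have := dotL2_ge0 (fun w => f w + - t * g w); rewrite dotL2_sqrD // -/A -/B -/C tB.
nra.
Qed.

Lemma L2_cvgE {u : nat -> T -> R} {Y : T -> R} : (forall N, u N \in L2) -> Y \in L2 ->
  L2_cvg P u Y <->
  (fun N => dotL2 (fun w => u N w - Y w) (fun w => u N w - Y w)) @ \oo --> 0.
Proof.
move=> hu hY; have E N : ('E_P[(fun w => (u N w - Y w) ^+ 2)%R]
    = (dotL2 (fun w => u N w - Y w) (fun w => u N w - Y w))%:E)%E.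
  by rewrite -dotL2E ?Lfun2B //; congr ('E_P[_])%E; apply/funext => w /=; rewrite expr2.
rewrite /L2_cvg (eq_fun E); split; first exact: fine_cvg.
by move=> H; apply: cvg_EFin => //; apply: nearW.
Qed.

Lemma L2_cvg_dotL2_eq {u : nat -> T -> R} {Y g : T -> R} {c : R} :
  (forall N, u N \in L2) -> Y \in L2 -> g \in L2 -> L2_cvg P u Y ->
  (\forall N \near \oo, dotL2 (u N) g = c) -> dotL2 Y g = c.
Proof.
move=> hu hY hg /(L2_cvgE hu hY) uY uc.
suff : (dotL2 Y g - c) ^+ 2 <= 0.
  by move=> sq_le0; apply/eqP; rewrite -subr_eq0 -sqrf_eq0 eq_le sq_le0 sqr_ge0.
set B := dotL2 g g.
rewrite -(mul0r (B + 1)); apply: (cvgr_to_ge (cvgMr_tmp (b := B + 1) uY)).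
apply: filterS uc => N ucN /=.
have -> : dotL2 Y g - c = - dotL2 (fun w => u N w - Y w) g by rewrite dotL2Bl // ucN opprB.
by rewrite sqrrN dotL2_sqr_le ?Lfun2B.
Qed.

Lemma dotL2_sum_cvg0 (h : nat) (c : nat -> R) (F : nat -> nat -> T -> R) :
  (forall l N, F l N \in L2) ->
  (forall l, (l < h)%N -> (fun N => dotL2 (F l N) (F l N)) @ \oo --> 0) ->
  (fun N => dotL2 (fun w => \sum_(0 <= l < h) c l * F l N w)
                  (fun w => \sum_(0 <= l < h) c l * F l N w)) @ \oo --> 0.
Proof.
move=> hF; elim: h => [|h IH] F0.
  under eq_fun do under eq_fun do rewrite big_geq //.
  by rewrite dotL2_0l; exact: cvg_cst.
set G := fun N w => \sum_(0 <= l < h) c l * F l N w.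
have hG N : G N \in L2 by apply: Lfun2_sum => l _.
under eq_fun do under eq_fun do rewrite big_nat_recr //=.
apply: (@squeeze_cvgr _ _ _ _ (fun=> 0)
  (fun N => 2 * dotL2 (G N) (G N) + 2 * (c h ^+ 2 * dotL2 (F h N) (F h N)))).
- by apply: nearW => N; rewrite dotL2_ge0; exact: (dotL2_sqrD_le _ _ (c h) (hG N) (hF h N)).
- exact: cvg_cst.
- have -> : 0 = 2 * 0 + 2 * (c h ^+ 2 * 0) :> R by rewrite !mulr0 addr0.
  apply: cvgD; apply: cvgMl_tmp; last exact: cvgMl_tmp (F0 _ (ltnSn h)).
  by apply: IH => l /ltnW; exact: F0.
Qed.

End L2InnerProduct.

Section ConvolutionIdentities.
Context {R : comPzRingType}.

Lemma sumr_nat_delta (F : nat -> R) m n t : (m <= t < n)%N ->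
  \sum_(m <= j < n) F j * (j == t)%:R = F t.
Proof.
move=> tmn; rewrite (eq_bigr (fun j => if j == t then F j else 0)).
  by rewrite -big_mkcond big_nat1_eq tmn.
by move=> j _; case: eqP; rewrite ?mulr1 ?mulr0.
Qed.

Lemma sum_triangle_swap (F : nat -> nat -> R) h :
  \sum_(0 <= l < h) \sum_(0 <= j < h - l) F l j
  = \sum_(0 <= n < h) \sum_(0 <= l < n.+1) F l (n - l)%N.
Proof.
elim: h => [|h IH]; first by rewrite !big_geq.
rewrite [RHS]big_nat_recr //= -IH.
rewrite (eq_big_nat _ _ (F2 := fun l => \sum_(0 <= j < h - l) F l j + F l (h - l)%N)).
  rewrite big_split /= [X in X + _]big_nat_recr //= subnn.
  by rewrite [\sum_(0 <= j < 0) _]big_geq // addr0.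
by move=> l /andP[_ hl]; rewrite subSn // big_nat_recr.
Qed.

Context {a b : nat -> R}.
Hypothesis ab_conv : forall n, \sum_(0 <= j < n.+1) a j * b (n - j)%N = (n == 0%N)%:R.

Lemma ma_ar_inverse (y : nat -> R) h : (0 < h)%N ->
  \sum_(0 <= l < h) b l * \sum_(0 <= j < h - l) a j * y (h - l - j)%N = y h.
Proof.
move=> h0; under eq_big_nat => l _ do rewrite mulr_sumr.
rewrite sum_triangle_swap (eq_big_nat _ _ (F2 := fun n => y (h - n)%N * (n == 0%N)%:R)).
  by rewrite sumr_nat_delta ?subn0.
move=> n /andP[_ hn]; rewrite -ab_conv mulr_sumr big_nat_rev /=.
apply: eq_big_nat => i /andP[_ hi]; rewrite add0n subSS.
have -> : (h - (n - i) - (n - (n - i)) = h - n)%N by lia.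
have -> : (n - (n - i) = i)%N by lia.
ring.
Qed.

End ConvolutionIdentities.

Section PredictorRecursion.
Context {R : comPzRingType} {a b : nat -> R} {x e : int -> R} {xt : nat -> R} {k : nat}.
Hypothesis a0 : a 0%N = 1.
Hypothesis xt_rec : forall g, (1 <= g)%N -> xt g =
  - (\sum_(1 <= j < g) a j * xt (g - j)%N)
  - \sum_(1 <= j < k.+1) a (g - 1 + j)%N * x (k%:Z + 1 - j%:Z).

Let err g := x (k%:Z + g%:Z) - xt g.

Lemma sum_ar_err g : (0 < g)%N ->
  \sum_(0 <= j < g) a j * err (g - j)%N = \sum_(0 <= j < g + k) a j * x (k%:Z + g%:Z - j%:Z).
Proof.
move=> g0.
have shift : \sum_(1 <= j < k.+1) a (g - 1 + j)%N * x (k%:Z + 1 - j%:Z)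
           = \sum_(g <= j < g + k) a j * x (k%:Z + g%:Z - j%:Z).
  rewrite big_add1 (big_addn 0 (g + k) g) addKn /=; apply: eq_big_nat => j _.
  by rewrite (_ : (g - 1 + j.+1 = j + g)%N); [congr (_ * x _); lia | lia].
have xt_sum : \sum_(0 <= j < g) a j * xt (g - j)%N
            = - \sum_(g <= j < g + k) a j * x (k%:Z + g%:Z - j%:Z).
  by rewrite big_ltn // a0 mul1r subn0 (xt_rec _ g0) -shift; ring.
rewrite (big_cat_nat (leq0n g) (leq_addr k g)) /= /err.
under eq_big_nat => j _ do rewrite mulrBr.
rewrite sumrB xt_sum opprK; congr (_ + _); apply: eq_big_nat => j /andP[_ jg].
by congr (_ * x _); lia.
Qed.

Lemma tail_sum_exchange h N : (0 < h)%N -> (k < N)%N ->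
  \sum_(k.+1 <= j < N) (\sum_(0 <= m < h) a (j + h - 1 - m)%N * b m) * x (k%:Z + 1 - j%:Z)
  = \sum_(0 <= l < h) b l * \sum_((h - l) + k <= j < N + (h - l - 1))
        a j * x (k%:Z + h%:Z - l%:Z - j%:Z).
Proof.
move=> h0 kN; under eq_big_nat => j _ do rewrite mulr_suml.
rewrite exchange_big_nat /=; apply: eq_big_nat => l /andP[_ lh].
rewrite mulr_sumr (_ : (h - l + k = k.+1 + (h - l - 1))%N); last by lia.
rewrite big_addn addnK; apply: eq_big_nat => j /andP[kj _].
rewrite (_ : (j + h - 1 - l = j + (h - l - 1))%N); last by lia.
rewrite (_ : k%:Z + 1 - j%:Z = k%:Z + h%:Z - l%:Z - (j + (h - l - 1))%N%:Z); last by lia.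
ring.
Qed.

Hypothesis ab_conv : forall n, \sum_(0 <= j < n.+1) a j * b (n - j)%N = (n == 0%N)%:R.

Lemma tail_residual_decomp h N : (0 < h)%N -> (k < N)%N ->
  \sum_(0 <= l < h) b l * (\sum_(0 <= j < N + (h - l - 1)) a j * x (k%:Z + h%:Z - l%:Z - j%:Z)
                           - e (k%:Z + h%:Z - l%:Z))
  = \sum_(k.+1 <= j < N) (\sum_(0 <= m < h) a (j + h - 1 - m)%N * b m) * x (k%:Z + 1 - j%:Z)
    - (\sum_(0 <= l < h) b l * e (k%:Z + h%:Z - l%:Z) - err h).
Proof.
move=> h0 kN; rewrite tail_sum_exchange //.
under eq_big_nat => l /andP[_ lh].
  rewrite (big_cat_nat (leq0n (h - l + k)) (_ : h - l + k <= N + (h - l - 1))%N); last by lia.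
  have head : \sum_(0 <= j < h - l + k) a j * x (k%:Z + h%:Z - l%:Z - j%:Z)
            = \sum_(0 <= j < h - l) a j * err (h - l - j)%N.
    rewrite sum_ar_err; last by lia.
    by apply: eq_big_nat => j _; congr (_ * x _); lia.
  rewrite /= head mulrBr mulrDr.
  over.
rewrite sumrB big_split /= -(ma_ar_inverse ab_conv err _ h0); ring.
Qed.

End PredictorRecursion.

Section Innovations.
Context {dT : measure_display} {T : measurableType dT} {R : realType}.
Variable P : probability T R.
Local Notation L2 := (Lfun P 2%:E).
Local Notation dot := (dotL2 P).
Variables (X eps : int -> T -> R) (a b : nat -> R) (s2 : R).
Hypothesis X_L2 : forall n, X n \in L2.
Hypothesis eps_L2 : forall n, eps n \in L2.
Hypothesis eps_uncorr : forall n m, n != m -> ('E_P[eps n \* eps m] = 0)%E.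
Hypothesis eps_var : forall n, ('E_P[eps n \* eps n] = s2%:E)%E.
Hypothesis X_MA :
  forall n, L2_cvg P (fun N w => \sum_(0 <= j < N) b j * eps (n - j%:Z) w) (X n).
Hypothesis eps_AR :
  forall n, L2_cvg P (fun N w => \sum_(0 <= j < N) a j * X (n - j%:Z) w) (eps n).

Lemma dotL2_eps n m : dot (eps n) (eps m) = (n == m)%:R * s2.
Proof.
apply: EFin_inj; rewrite -dotL2E //.
by have [<-|nm] := eqVneq n m; rewrite ?eps_var ?mul1r // eps_uncorr // mul0r.
Qed.

Lemma dotL2_X_eps_future n m : n < m -> dot (X n) (eps m) = 0.
Proof.
move=> nm; apply: (L2_cvg_dotL2_eq P _ (X_L2 n) (eps_L2 m) (X_MA n)).
  by move=> N; apply: Lfun2_sum => j _.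
apply: nearW => N; rewrite dotL2_suml // big1 // => j _.
by rewrite dotL2_eps (_ : n - j%:Z == m = false) ?mul0r ?mulr0 //; lia.
Qed.

Lemma dotL2_X_eps m t : dot (X (m + t%:Z)) (eps m) = s2 * b t.
Proof.
apply: (L2_cvg_dotL2_eq P _ (X_L2 _) (eps_L2 m) (X_MA _)).
  by move=> N; apply: Lfun2_sum => j _.
apply: filterS (nbhs_infty_gt t) => N tN; rewrite dotL2_suml //.
under eq_big_nat => j _.
  rewrite dotL2_eps (_ : m + t%:Z - j%:Z == m = (j == t)); last by apply/eqP/eqP; lia.
  rewrite mulrCA mulrC.
  over.
by rewrite /= sumr_nat_delta // mulrC.
Qed.

Variables (k : nat) (Xt : nat -> T -> R).
Hypothesis a0 : a 0%N = 1.
Hypothesis Xt_rec : forall g, (1 <= g)%N -> Xt g = fun w =>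
  - (\sum_(1 <= j < g) a j * Xt (g - j)%N w)
  - \sum_(1 <= j < k.+1) a (g - 1 + j)%N * X (k%:Z + 1 - j%:Z) w.

Lemma predictor_L2 g : (1 <= g)%N -> Xt g \in L2.
Proof.
elim/ltn_ind: g => g IH g1; rewrite (Xt_rec _ g1).
apply: Lfun2B; last by apply: Lfun2_sum => j _.
apply/Lfun2N/Lfun2_sum => j; rewrite mem_index_iota => /andP[j1 jg].
by apply: IH; lia.
Qed.

Definition innovation_term h w := \sum_(0 <= l < h) b l * eps (k%:Z + h%:Z - l%:Z) w.

Definition truncation_term h w := innovation_term h w - (X (k%:Z + h%:Z) w - Xt h w).

Definition truncation_partial h N w := \sum_(k.+1 <= j < N)
  (\sum_(0 <= m < h) a (j + h - 1 - m)%N * b m) * X (k%:Z + 1 - j%:Z) w.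

Lemma innovation_term_L2 h : innovation_term h \in L2.
Proof. by apply: Lfun2_sum => l _. Qed.

Lemma truncation_term_L2 h : (1 <= h)%N -> truncation_term h \in L2.
Proof.
by move=> h1; apply/Lfun2B/Lfun2B/predictor_L2; rewrite ?innovation_term_L2.
Qed.

Lemma truncation_partial_L2 h N : truncation_partial h N \in L2.
Proof. by apply: Lfun2_sum => j _. Qed.

Lemma dotL2_innovation_term h :
  dot (innovation_term h) (innovation_term h) = s2 * \sum_(0 <= l < h) b l ^+ 2.
Proof.
rewrite {1}/innovation_term dotL2_suml ?innovation_term_L2 // mulr_sumr.
apply: eq_big_nat => l /andP[_ lh]; rewrite dotL2C dotL2_suml //.
rewrite (eq_big_nat _ _ (F2 := fun j => b j * s2 * (j == l)%:R)).
  by rewrite sumr_nat_delta // mulrA -expr2 mulrC.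
move=> j _; rewrite dotL2_eps mulrA mulrAC.
by rewrite (_ : (k%:Z + h%:Z - j%:Z == k%:Z + h%:Z - l%:Z) = (j == l)) //; apply/eqP/eqP; lia.
Qed.

Hypothesis s2_gt0 : 0 < s2.

Lemma ar_ma_conv t : \sum_(0 <= j < t.+1) a j * b (t - j)%N = (t == 0%N)%:R.
Proof.
have dot_eps0 : dot (eps 0) (eps (0 - t%:Z)) = s2 * \sum_(0 <= j < t.+1) a j * b (t - j)%N.
  apply: (L2_cvg_dotL2_eq P _ (eps_L2 _) (eps_L2 _) (eps_AR 0)).
    by move=> N; apply: Lfun2_sum => j _.
  apply: filterS (nbhs_infty_gt t) => N tN.
  rewrite dotL2_suml // (big_cat_nat (leq0n t.+1) tN) /= [X in _ + X]big_nat_cond.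
  rewrite [X in _ + X]big1 ?addr0 => [|j /andP[/andP[tj _] _]]; last first.
    by rewrite dotL2_X_eps_future ?mulr0 //; lia.
  rewrite mulr_sumr; apply: eq_big_nat => j /andP[_ jt].
  rewrite (_ : 0 - j%:Z = (0 - t%:Z) + (t - j)%N%:Z); last by lia.
  by rewrite dotL2_X_eps mulrCA.
apply: (mulfI (lt0r_neq0 s2_gt0)); rewrite -dot_eps0 dotL2_eps mulrC.
by rewrite (_ : (0 == 0 - t%:Z) = (t == 0%N)) //; apply/eqP/eqP; lia.
Qed.

Lemma truncation_partial_cvg h : (1 <= h)%N ->
  L2_cvg P (truncation_partial h) (truncation_term h).
Proof.
move=> h1.
apply/(L2_cvgE P (truncation_partial_L2 h) (truncation_term_L2 h h1)).
pose F l N w := \sum_(0 <= j < N + (h - l - 1)) a j * X (k%:Z + h%:Z - l%:Z - j%:Z) w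
                - eps (k%:Z + h%:Z - l%:Z) w.
have F_L2 l N : F l N \in L2 by apply: Lfun2B => //; apply: Lfun2_sum => j _.
have F_cvg0 l : (l < h)%N -> (fun N => dot (F l N) (F l N)) @ \oo --> 0.
  move=> _; have AR_L2 N : (fun w => \sum_(0 <= j < N) a j
      * X (k%:Z + h%:Z - l%:Z - j%:Z) w) \in L2 by apply: Lfun2_sum => j _.
  have := (L2_cvgE P AR_L2 (eps_L2 _)).1 (eps_AR (k%:Z + h%:Z - l%:Z)).
  by rewrite -(cvg_shiftn (h - l - 1)).
(* The difference to the limit is a b-combination of AR remainders (tail_residual_decomp). *)
apply: cvg_trans (dotL2_sum_cvg0 P h b F F_L2 F_cvg0).
apply: near_eq_cvg; apply: filterS (nbhs_infty_gt k) => N kN /=.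
suff -> : (fun w => \sum_(0 <= l < h) b l * F l N w)
  = fun w => truncation_partial h N w - truncation_term h w by [].
apply/funext => w; apply: (tail_residual_decomp (x := X^~ w) (e := eps^~ w) (xt := Xt^~ w)
  a0 _ ar_ma_conv h N h1 kN).
by move=> g g1; rewrite Xt_rec.
Qed.

Lemma dotL2_truncation_eps h l : (1 <= h)%N -> (l < h)%N ->
  dot (truncation_term h) (eps (k%:Z + h%:Z - l%:Z)) = 0.
Proof.
move=> h1 lh; apply: (L2_cvg_dotL2_eq P (truncation_partial_L2 h) (truncation_term_L2 h h1)
  (eps_L2 _) (truncation_partial_cvg h h1)).
apply: nearW => N; rewrite dotL2_suml // big_seq big1 // => j.
by rewrite mem_index_iota => /andP[kj _]; rewrite dotL2_X_eps_future ?mulr0 //; lia.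
Qed.

Lemma dotL2_truncation_innovation h : (1 <= h)%N ->
  dot (truncation_term h) (innovation_term h) = 0.
Proof.
move=> h1; rewrite dotL2C dotL2_suml ?truncation_term_L2 // big_seq big1 // => l.
by rewrite mem_index_iota => /andP[_ lh]; rewrite dotL2C dotL2_truncation_eps ?mulr0.
Qed.

Lemma predictor_mse h : (1 <= h)%N ->
  ('E_P[(fun w => (Xt h w - X (k%:Z + h%:Z) w) ^+ 2)%R]
     = (s2 * \sum_(0 <= l < h) b l ^+ 2)%:E
       + 'E_P[(fun w => truncation_term h w ^+ 2)%R])%E.
Proof.
move=> h1; have S_L2 := truncation_term_L2 h h1.
have I_L2 := innovation_term_L2 h.
pose D w := truncation_term h w + -1 * innovation_term h w.
have -> : (fun w => (Xt h w - X (k%:Z + h%:Z) w) ^+ 2) = D \* D.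
  by apply/funext => w; rewrite /D /truncation_term /=; ring.
have -> : (fun w => truncation_term h w ^+ 2) = truncation_term h \* truncation_term h.
  by apply/funext => w; rewrite /= expr2.
have D_L2 : D \in L2 by apply/Lfun2D/Lfun2Z.
rewrite !dotL2E // /D dotL2_sqrD // dotL2_truncation_innovation //.
by rewrite dotL2_innovation_term -EFinD; congr (_%:E); ring.
Qed.

Lemma truncated_predictor_error h : (1 <= h)%N ->
  exists S : T -> R,
    S \in L2 /\
    L2_cvg P (fun N w => \sum_(k.+1 <= j < N)
                (\sum_(0 <= m < h) a (j + h - 1 - m)%N * b m) * X (k%:Z + 1 - j%:Z) w) S /\
    (\forall w \ae P, X (k%:Z + h%:Z) w - Xt h w
       = \sum_(0 <= l < h) b l * eps (k%:Z + h%:Z - l%:Z) w - S w) /\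
    ('E_P[(fun w => (Xt h w - X (k%:Z + h%:Z) w) ^+ 2)%R]
       = (s2 * \sum_(0 <= l < h) b l ^+ 2)%:E + 'E_P[(fun w => S w ^+ 2)%R])%E.
Proof.
move=> h1; exists (truncation_term h).
split; first exact: truncation_term_L2.
split; first exact: truncation_partial_cvg.
split; last exact: predictor_mse.
by apply: aeW => w; rewrite /truncation_term /innovation_term; ring.
Qed.

End Innovations.

Theorem mainTheorem7 (R : realType) (dT : measure_display) (T : measurableType dT)
  (P : probability T R) (X eps : int -> T -> R) (sigma : int -> R)
  (a b : nat -> R) (s2 d : R) (k : nat) (Xt : nat -> T -> R) :
  (forall n, X n \in Lfun P 2%:E) ->
  (forall n, ('E_P[X n] = 0)%E) ->
  (forall n j, ('E_P[X n \* X (n + j)%R] = (sigma j)%:E)%E) ->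
  (\esum_(j in [set: int]) (`|sigma j|)%:E = +oo)%E ->
  (forall n, eps n \in Lfun P 2%:E) ->
  (forall n, ('E_P[eps n] = 0)%E) ->
  (forall n m, n != m -> ('E_P[eps n \* eps m] = 0)%E) ->
  (forall n, ('E_P[eps n \* eps n] = s2%:E)%E) ->
  0 < s2 ->
  b 0%N = 1 ->
  cvgn (series (fun j => b j ^+ 2)) ->
  (forall n, L2_cvg P (fun N w => \sum_(0 <= j < N) b j * eps (n - j%:Z) w) (X n)) ->
  a 0%N = 1 ->
  cvgn (series (fun j => `|a j|)) ->
  (forall n, L2_cvg P (fun N w => \sum_(0 <= j < N) a j * X (n - j%:Z) w) (eps n)) ->
  (forall z : R, `|z| < 1 ->
     limn (series (fun j => a j * z ^+ j)) * limn (series (fun j => b j * z ^+ j)) = 1) ->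
  0 < d < 2^-1 ->
  (forall delta : R, 0 < delta -> exists C1 C2 : R, forall j : nat, (0 < j)%N ->
     `|a j| <= C1 * (j%:R `^ (- d - 1 + delta)) /\
     `|b j| <= C2 * (j%:R `^ (d - 1 + delta))) ->
  (1 <= k)%N ->
  (forall h, (1 <= h)%N -> Xt h = fun w =>
     - (\sum_(1 <= j < h) a j * Xt (h - j)%N w)
     - \sum_(1 <= j < k.+1) a (h - 1 + j)%N * X (k%:Z + 1 - j%:Z) w) ->
  forall h, (1 <= h)%N ->
  exists S : T -> R,
    S \in Lfun P 2%:E /\
    L2_cvg P (fun N w => \sum_(k.+1 <= j < N)
                (\sum_(0 <= m < h) a (j + h - 1 - m)%N * b m) * X (k%:Z + 1 - j%:Z) w) S /\
    (\forall w \ae P, X (k%:Z + h%:Z) w - Xt h w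
       = \sum_(0 <= l < h) b l * eps (k%:Z + h%:Z - l%:Z) w - S w) /\
    ('E_P[(fun w => (Xt h w - X (k%:Z + h%:Z) w) ^+ 2)%R]
       = (s2 * \sum_(0 <= l < h) b l ^+ 2)%:E + 'E_P[(fun w => S w ^+ 2)%R])%E.
Proof.
move=> X_L2 _ _ _ eps_L2 _ eps_uncorr eps_var s2_gt0 _ _ X_MA a0 _ eps_AR _ _ _ _ Xt_rec.
exact: truncated_predictor_error.
Qed.
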